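(* If $\partial$ is a tree-like $\mathrm{LM}_{\rightarrow}$ deduction of the sequent $\Rightarrow\rho$, then $\phi(\partial)\le(|\rho|+1)^2$.
   Context: Formulas of $\mathcal{L}_{\rightarrow}$ are built from propositional variables using only $\rightarrow$; $|\alpha|$ is the number of occurrences of $\rightarrow$ in $\alpha$. Sequents are $\Gamma\Rightarrow\alpha$ with $\Gamma$ a finite multiset. $\mathrm{LM}_{\rightarrow}$ has axioms $\Gamma,p\Rightarrow p$ ($p$ a variable) and rules: from $\Gamma,\alpha\Rightarrow\beta$ infer $\Gamma\Rightarrow\alpha\rightarrow\beta$ provided $\Gamma$ contains no $(\alpha\rightarrow\beta)\rightarrow\gamma$; from $\Gamma,\alpha,\beta\rightarrow\gamma\Rightarrow\beta$ infer $\Gamma,(\alpha\rightarrow\beta)\rightarrow\gamma\Rightarrow\alpha\rightarrow\beta$; from $\Gamma,p,\gamma\Rightarrow q$ infer $\Gamma,p,p\rightarrow\gamma\Rightarrow q$ ($p\neq q$ variables, $q$ occurring in $\Gamma$ or $\gamma$); from $\Gamma,\alpha,\beta\rightarrow\gamma\Rightarrow\beta$ and $\Gamma,\gamma\Rightarrow q$ infer $\Gamma,(\alpha\rightarrow\beta)\rightarrow\gamma\Rightarrow q$ ($q$ a variable occurring in $\Gamma$ or $\gamma$). $\phi(\partial)$ (the foundation) is the number of distinct formulas occurring in $\partial$. *)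

From HB Require Import structures.
From mathcomp Require Import all_boot.

Set Implicit Arguments.
Unset Strict Implicit.
Unset Printing Implicit Defensive.

Inductive form : Type :=
| Var : nat -> form
| Imp : form -> form -> form.

Lemma form_eq_dec : comparable form.
Proof. move=> x y; rewrite /decidable; do 2 decide equality. Qed.

HB.instance Definition _ := comparableMixin form_eq_dec.

Fixpoint fsize (a : form) : nat :=
  match a with
  | Var _ => 0
  | Imp b c => (fsize b + fsize c).+1
  end.

Fixpoint var_in (q : nat) (a : form) : bool :=
  match a with
  | Var p => p == q
  | Imp b c => var_in q b || var_in q c
  end.

Definition var_in_ctx (q : nat) (G : seq form) (c : form) : bool :=
  has (var_in q) G || var_in q c.

Definition is_impimp_of (a b f : form) : bool :=
  if f is Imp (Imp a' b') _ then (a' == a) && (b' == b) else false.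

(* Sequents Gamma => alpha, Gamma a finite multiset represented by a list,
   taken up to permutation (perm_eq) at every node.
   LM G a is the type of tree-like LM_-> deductions of G => a. *)
Inductive LM : seq form -> form -> Type :=
| LM_ax (G' G : seq form) (p : nat) :
    perm_eq G' (Var p :: G) ->
    LM G' (Var p)
| LM_impR (G H : seq form) (a b : form) :
    ~~ has (is_impimp_of a b) G ->
    perm_eq H (a :: G) ->
    LM H b ->
    LM G (Imp a b)
| LM_impimp (G' G H : seq form) (a b c : form) :
    perm_eq G' (Imp (Imp a b) c :: G) ->
    perm_eq H (a :: Imp b c :: G) ->
    LM H b ->
    LM G' (Imp a b)
| LM_var (G' G H : seq form) (p q : nat) (c : form) :
    p != q ->
    var_in_ctx q G c ->
    perm_eq G' (Var p :: Imp (Var p) c :: G) ->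
    perm_eq H (Var p :: c :: G) ->
    LM H (Var q) ->
    LM G' (Var q)
| LM_impL (G' G H1 H2 : seq form) (a b c : form) (q : nat) :
    var_in_ctx q G c ->
    perm_eq G' (Imp (Imp a b) c :: G) ->
    perm_eq H1 (a :: Imp b c :: G) ->
    perm_eq H2 (c :: G) ->
    LM H1 b ->
    LM H2 (Var q) ->
    LM G' (Var q).

Fixpoint formulas (G : seq form) (a : form) (d : LM G a) : seq form :=
  match d with
  | LM_ax _ _ _ _ => a :: G
  | LM_impR _ _ _ _ _ _ d1 => a :: G ++ formulas d1
  | LM_impimp _ _ _ _ _ _ _ _ d1 => a :: G ++ formulas d1
  | LM_var _ _ _ _ _ _ _ _ _ _ d1 => a :: G ++ formulas d1
  | LM_impL _ _ _ _ _ _ _ _ _ _ _ _ d1 d2 =>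
      a :: G ++ formulas d1 ++ formulas d2
  end.

Definition foundation (G : seq form) (a : form) (d : LM G a) : nat :=
  size (undup (formulas d)).

(** Every formula occurring in a deduction of [=> rho] lies in the closure of
    [rho] under taking both components of an implication and under the shift
    [(a -> b) -> c  |->  b -> c]: each rule of LM only puts such formulas of its
    conclusion into its premises.  This closure is small: the closure of
    [a -> b] consists of [a -> b], the closures of [a] and [b], and the formulas
    [t -> b] for the at most [|a|] proper right tails [t] of [a], whence the
    bound [(|rho| + 1)^2] by induction on [rho]. *)

From mathcomp Require Import all_boot.
From mathcomp Require Import zify.

Section ClosedSets.

Variable S : pred form.

Hypothesis S_impl : forall {a b}, S (Imp a b) -> S a.
Hypothesis S_impr : forall {a b}, S (Imp a b) -> S b.
Hypothesis S_shift : forall {a b c}, S (Imp (Imp a b) c) -> S (Imp b c).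

Lemma all_formulas Gamma alpha (d : LM Gamma alpha) :
  all S (alpha :: Gamma) -> all S (formulas d).
Proof.
elim: d => //=.
- move=> G H a b _ eH d1 IH /andP[Sab SG].
  have SH : all S (b :: H).
    by rewrite /= (perm_all _ eH) /= SG (S_impl Sab) (S_impr Sab).
  by rewrite all_cat Sab SG IH.
- move=> G' G H a b c eG' eH d1 IH /andP[Sab SG'].
  move: (SG'); rewrite (perm_all _ eG') /= => /andP[Sabc SG].
  have SH : all S (b :: H).
    by rewrite /= (perm_all _ eH) /= SG (S_impl Sab) (S_impr Sab) (S_shift Sabc).
  by rewrite all_cat Sab SG' IH.
- move=> G' G H p q c _ _ eG' eH d1 IH /andP[Sq SG'].
  move: (SG'); rewrite (perm_all _ eG') /= => /and3P[Sp Spc SG].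
  have SH : all S (Var q :: H) by rewrite /= (perm_all _ eH) /= Sq Sp SG (S_impr Spc).
  by rewrite all_cat Sq SG' IH.
- move=> G' G H1 H2 a b c q _ eG' eH1 eH2 d1 IH1 d2 IH2 /andP[Sq SG'].
  move: (SG'); rewrite (perm_all _ eG') /= => /andP[Sabc SG].
  have Sab := S_impl Sabc.
  have SH1 : all S (b :: H1).
    by rewrite /= (perm_all _ eH1) /= SG (S_impl Sab) (S_impr Sab) (S_shift Sabc).
  have SH2 : all S (Var q :: H2) by rewrite /= (perm_all _ eH2) /= Sq SG (S_impr Sabc).
  by rewrite !all_cat Sq SG' IH1 ?IH2.
Qed.

End ClosedSets.

Fixpoint right_tails (a : form) : seq form :=
  if a is Imp _ b then b :: right_tails b else [::].

Fixpoint shift_closure (a : form) : seq form :=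
  match a with
  | Var p => [:: Var p]
  | Imp a b =>
      Imp a b :: shift_closure a ++ shift_closure b ++ [seq Imp t b | t <- right_tails a]
  end.

Lemma size_right_tails a : size (right_tails a) <= fsize a.
Proof. by elim: a => [p|a _ b IH] //=; lia. Qed.

Lemma size_shift_closure a : size (shift_closure a) <= (fsize a + 1) ^ 2.
Proof.
elim: a => [p|a IHa b IHb] //=.
by rewrite !size_cat size_map; have := size_right_tails a; nia.
Qed.

Lemma right_tails_impr a b c : Imp b c \in right_tails a -> c \in right_tails a.
Proof.
elim: a => [p|x _ y IH] //=; rewrite !inE => /predU1P[<-|/IH->]; last by rewrite orbT.
by rewrite /= inE eqxx orbT.
Qed.

Lemma mem_shift_closure a : a \in shift_closure a.
Proof. by case: a => [p|a b]; rewrite /= inE eqxx. Qed.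

Lemma in_shift_closure_imp f a b :
  f \in shift_closure (Imp a b) =
    [|| f == Imp a b, f \in shift_closure a, f \in shift_closure b
      | f \in [seq Imp t b | t <- right_tails a]].
Proof. by rewrite /= inE !mem_cat. Qed.

Lemma right_tails_shift_closure a : {subset right_tails a <= shift_closure a}.
Proof.
elim: a => [p|a _ b IH] t //; rewrite in_shift_closure_imp /= inE.
by case/predU1P=> [->|/IH bt]; rewrite ?mem_shift_closure ?bt !orbT.
Qed.

Lemma shift_closure_imp r a b :
  Imp a b \in shift_closure r ->
  (a \in shift_closure r) && (b \in shift_closure r).
Proof.
elim: r => [p|x IHx y IHy]; first by rewrite inE => /eqP.
rewrite !in_shift_closure_imp.
case/or4P=> [/eqP[-> ->]|/IHx/andP[-> ->]|/IHy/andP[-> ->]|/mapP[t tx [-> ->]]].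
- by rewrite !mem_shift_closure !orbT.
- by rewrite !orbT.
- by rewrite !orbT.
- by rewrite right_tails_shift_closure ?mem_shift_closure ?orbT.
Qed.

Lemma shift_closure_shift r a b c :
  Imp (Imp a b) c \in shift_closure r -> Imp b c \in shift_closure r.
Proof.
elim: r => [p|x IHx y IHy]; first by rewrite inE => /eqP.
rewrite !in_shift_closure_imp.
case/or4P=> [/eqP[<- <-]|/IHx->|/IHy->|/mapP[t tx [tE ->]]]; rewrite ?orbT //.
- by rewrite (map_f (Imp^~ c)) ?orbT //= mem_head.
- by subst t; rewrite (map_f (Imp^~ y)) ?orbT //; apply: right_tails_impr tx.
Qed.

Theorem lemma2 (rho : form) (d : LM [::] rho) :
  foundation d <= (fsize rho + 1) ^ 2.
Proof.
apply: leq_trans (size_shift_closure rho).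
apply: uniq_leq_size (undup_uniq _) _ => f; rewrite mem_undup.
apply/allP: f; apply: (@all_formulas (fun f => f \in shift_closure rho)).
- by move=> a b /shift_closure_imp/andP[].
- by move=> a b /shift_closure_imp/andP[].
- exact: shift_closure_shift.
- by rewrite /= mem_shift_closure.
Qed.
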